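(* For every three-qubit state $\rho_{ABC}$, $$S^{\max}(\rho_{ABC})+2\,\tau(\rho_{ABC})\le 3,$$ where $S^{\max}(\rho_{ABC})=\max\{S_{AB},S_{AC},S_{BC}\}$.
   Context: For a two-qubit state $\rho$ let $t_{kl}=\mathrm{Tr}[\rho\,\sigma_k\otimes\sigma_l]$ ($\sigma_k$ Pauli matrices) and $S(\rho)=\sum_{k,l=1}^3 t_{kl}^2$; $S_{ij}=S(\rho_{ij})$ for the two-qubit reduced states $\rho_{ij}$ of $\rho_{ABC}$. $\tau$ is the three-tangle: for a pure state, $\tau=1-|\vec a|^2-\mathcal C_{AB}^2-\mathcal C_{AC}^2$, where $\vec a$ with $a_k=\mathrm{Tr}[\rho_A\sigma_k]$ is the Bloch vector of qubit $A$ and $\mathcal C_{ij}$ is the Wootters concurrence of $\rho_{ij}$ ($\mathcal C(\rho)=\max\{0,\lambda_1-\lambda_2-\lambda_3-\lambda_4\}$, $\lambda_i$ the decreasingly ordered square roots of the eigenvalues of $\rho(\sigma_2\otimes\sigma_2)\rho^*(\sigma_2\otimes\sigma_2)$); for a mixed state $\tau$ is the convex roof, i.e. the minimum of $\sum_n p_n\tau(\psi_n)$ over pure-state decompositions $\rho=\sum_n p_n|\psi_n\rangle\langle\psi_n|$. *)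

From HB Require Import structures.
From mathcomp Require Import all_boot all_order all_algebra.
From mathcomp Require Import boolp classical_sets reals.
From mathcomp Require Import complex.
Set Implicit Arguments. Unset Strict Implicit. Unset Printing Implicit Defensive.
Import Order.TTheory GRing.Theory Num.Theory.
Local Open Scope ring_scope.

Section QuantumDefs.
Variable R : realType.
Local Notation C := R[i].

Definition adjmx m n (A : 'M[C]_(m, n)) : 'M[C]_(n, m) := map_mx Num.conj A^T.
Definition conjmx m n (A : 'M[C]_(m, n)) : 'M[C]_(m, n) := map_mx Num.conj A.

(** Pauli matrices sigma_1, sigma_2, sigma_3 (k : 'I_3 encodes k+1). *)
Definition pauli (k : 'I_3) : 'M[C]_2 :=
  \matrix_(i < 2, j < 2)
    match val k with
    | 0%N => if i == j then 0 else 1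
    | 1%N => if i == j then 0 else (if (val i == 0%N) then - 'i%C else 'i%C)
    | _ => if i == j then (if val i == 0%N then 1 else -1) else 0
    end.

(** Computational basis encoding: two qubits |a b> ~ 2a+b,
    three qubits |a b c> ~ 4a+2b+c. *)
Definition enc2 (a b : 'I_2) : 'I_4 := inord (2 * a + b).
Definition enc3 (a b c : 'I_2) : 'I_8 := inord (4 * a + 2 * b + c).
Definition hi2 (i : 'I_4) : 'I_2 := inord (i %/ 2).
Definition lo2 (i : 'I_4) : 'I_2 := inord (i %% 2).

Definition kron2 (A B : 'M[C]_2) : 'M[C]_4 :=
  \matrix_(i, j) (A (hi2 i) (hi2 j) * B (lo2 i) (lo2 j)).

(** Partial traces of a three-qubit operator (qubits ordered A,B,C). *)
Definition rhoAB (rho : 'M[C]_8) : 'M[C]_4 :=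
  \matrix_(i, j) \sum_(c < 2) rho (enc3 (hi2 i) (lo2 i) c) (enc3 (hi2 j) (lo2 j) c).
Definition rhoAC (rho : 'M[C]_8) : 'M[C]_4 :=
  \matrix_(i, j) \sum_(b < 2) rho (enc3 (hi2 i) b (lo2 i)) (enc3 (hi2 j) b (lo2 j)).
Definition rhoBC (rho : 'M[C]_8) : 'M[C]_4 :=
  \matrix_(i, j) \sum_(a < 2) rho (enc3 a (hi2 i) (lo2 i)) (enc3 a (hi2 j) (lo2 j)).
Definition rhoA (rho : 'M[C]_8) : 'M[C]_2 :=
  \matrix_(a, a') \sum_(b < 2) \sum_(c < 2) rho (enc3 a b c) (enc3 a' b c).

(** Correlation tensor t_kl = Tr[rho sigma_k (x) sigma_l] (real for
    Hermitian rho; we take its real part) and S(rho) = sum_kl t_kl^2. *)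
Definition tcorr (rho : 'M[C]_4) (k l : 'I_3) : R :=
  complex.Re (\tr (rho *m kron2 (pauli k) (pauli l))).
Definition Scorr (rho : 'M[C]_4) : R :=
  \sum_(k < 3) \sum_(l < 3) tcorr rho k l ^+ 2.

Definition sigma2 : 'I_3 := inord 1.
Definition wootters_mx (rho : 'M[C]_4) : 'M[C]_4 :=
  rho *m kron2 (pauli sigma2) (pauli sigma2) *m conjmx rho
      *m kron2 (pauli sigma2) (pauli sigma2).

Definition wootters_lambdas_spec (M : 'M[C]_4) (s : seq R) : Prop :=
  [/\ size s = 4%N, all (fun x => 0 <= x) s, sorted (fun x y => y <= x) s
    & char_poly M = \prod_(x <- s) ('X - ((x ^+ 2)%:C)%C%:P)].

Definition wootters_lambdas (rho : 'M[C]_4) : seq R :=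
  xget [::] (wootters_lambdas_spec (wootters_mx rho)).

Definition concurrence (rho : 'M[C]_4) : R :=
  let s := wootters_lambdas rho in
  Num.max 0 (s`_0 - s`_1 - s`_2 - s`_3).

Definition psd n (A : 'M[C]_n) : Prop :=
  forall v : 'cV[C]_n, 0 <= (adjmx v *m A *m v) 0 0.
Definition is_state n (rho : 'M[C]_n) : Prop := psd rho /\ \tr rho = 1.

Definition unit_vec n (psi : 'cV[C]_n) : Prop := (adjmx psi *m psi) 0 0 = 1.
Definition proj (psi : 'cV[C]_8) : 'M[C]_8 := psi *m adjmx psi.

Definition bloch (rho : 'M[C]_8) (k : 'I_3) : R :=
  complex.Re (\tr (rhoA rho *m pauli k)).

Definition tau_pure (psi : 'cV[C]_8) : R :=
  let rho := proj psi in
  1 - \sum_(k < 3) bloch rho k ^+ 2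
    - concurrence (rhoAB rho) ^+ 2 - concurrence (rhoAC rho) ^+ 2.

Definition decomposition (rho : 'M[C]_8) n (p : 'I_n -> R) (psi : 'I_n -> 'cV[C]_8)
  : Prop :=
  [/\ forall i, 0 <= p i, \sum_(i < n) p i = 1, forall i, unit_vec (psi i)
    & rho = \sum_(i < n) (p i)%:C%C *: proj (psi i)].

Definition tau (rho : 'M[C]_8) : R :=
  inf [set x : R | exists n (p : 'I_n -> R) (psi : 'I_n -> 'cV[C]_8),
         decomposition rho p psi /\ x = \sum_(i < n) p i * tau_pure (psi i)].

Definition Smax (rho : 'M[C]_8) : R :=
  Num.max (Scorr (rhoAB rho)) (Num.max (Scorr (rhoAC rho)) (Scorr (rhoBC rho))).

End QuantumDefs.

From Pilot Require Import Defs.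
From HB Require Import structures.
From mathcomp Require Import all_boot all_order all_algebra.
From mathcomp Require Import boolp classical_sets reals.
From mathcomp Require Import complex spectral.
From mathcomp Require Import ring lra.
Set Implicit Arguments. Unset Strict Implicit. Unset Printing Implicit Defensive.
Import Order.TTheory GRing.Theory Num.Theory.
Import Normc.
Local Open Scope ring_scope.
Local Notation Re := complex.Re.
Local Notation Im := complex.Im.

(* For a pure state psi and a cut XY|Z, arrange the amplitudes into a 4x2 matrix V
   (rows XY, column Z), so that rho_XY = V V^+, and let P_XY = V^T (s_y (x) s_y) V.
   The nonzero eigenvalues of Wootters' matrix of V V^+ are those of P conj(P), hence
   C_XY^2 = |P_XY|^2 - 2 |det P_XY| (Frobenius norm).  The three determinants
   det P_XY agree (up to sign this is Cayley's hyperdeterminant), so tau = 4 |det P|,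
   and a direct computation in the amplitudes gives
     |x|^2 = 1 - |P_XY|^2 - |P_XZ|^2   for the Bloch vector of each qubit x,
     S_XY = 1 + 2 |P_XY|^2 - |P_XZ|^2 - |P_YZ|^2.
   With 2 |det P| <= |P|^2 this yields
     S_XY + 2 tau <= 1 + (|P_XY|^2 + |P_XZ|^2) + (|P_XY|^2 + |P_YZ|^2) <= 3.
   For a mixed state, every t_kl is linear in rho and squares are convex, so
   S_max(rho) + 2 sum_i p_i tau(psi_i) <= 3 for every pure-state decomposition; the
   spectral theorem provides one, and tau(rho) is the infimum over all of them. *)

Notation q0 := (ord0 : 'I_2).
Notation q1 := (ord_max : 'I_2).

Lemma big_ord2 (V : nmodType) (F : 'I_2 -> V) : \sum_(i < 2) F i = F q0 + F q1.
Proof. by rewrite big_ord_recl big_ord1; congr (_ + F _); apply: val_inj. Qed.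

Definition sum2 (V : nmodType) (f : 'I_2 -> V) : V := f q0 + f q1.

Notation k0 := (ord0 : 'I_3).
(* A literal ordinal, so that [val k1] reduces (unlike [inord 1]). *)
Definition k1 : 'I_3 := @Ordinal 3 1 isT.
Notation k2 := (ord_max : 'I_3).

Lemma big_ord3 (V : nmodType) (F : 'I_3 -> V) : \sum_(k < 3) F k = F k0 + F k1 + F k2.
Proof.
by rewrite !big_ord_recl big_ord0 addr0 addrA; congr (_ + F _ + F _); apply: val_inj.
Qed.

Lemma big_ord4_enc2 (V : nmodType) (F : 'I_4 -> V) : \sum_(i < 4) F i =
  F (enc2 q0 q0) + F (enc2 q0 q1) + F (enc2 q1 q0) + F (enc2 q1 q1).
Proof.
rewrite !big_ord_recl big_ord0 addr0 !addrA.
by congr (F _ + F _ + F _ + F _); apply: val_inj; rewrite /= inordK.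
Qed.

Lemma big_ord8_enc3 (V : nmodType) (F : 'I_8 -> V) : \sum_(i < 8) F i =
  F (enc3 q0 q0 q0) + F (enc3 q0 q0 q1) + F (enc3 q0 q1 q0) + F (enc3 q0 q1 q1) +
  F (enc3 q1 q0 q0) + F (enc3 q1 q0 q1) + F (enc3 q1 q1 q0) + F (enc3 q1 q1 q1).
Proof.
rewrite !big_ord_recl big_ord0 addr0 !addrA.
by congr (F _ + F _ + F _ + F _ + F _ + F _ + F _ + F _); apply: val_inj; rewrite /= inordK.
Qed.

Lemma hi2_enc2 a b : hi2 (enc2 a b) = a.
Proof.
by apply: val_inj; case: a => [[|[]]] // ?; case: b => [[|[]]] // ?; rewrite /= !inordK.
Qed.

Lemma lo2_enc2 a b : lo2 (enc2 a b) = b.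
Proof.
by apply: val_inj; case: a => [[|[]]] // ?; case: b => [[|[]]] // ?; rewrite /= !inordK.
Qed.

Lemma enc2_hilo i : enc2 (hi2 i) (lo2 i) = i.
Proof. by apply: val_inj; case: i => [[|[|[|[]]]]] // ?; rewrite /= !inordK. Qed.

Lemma det_mx2 (T : comPzRingType) (M : 'M[T]_2) :
  \det M = M q0 q0 * M q1 q1 - M q0 q1 * M q1 q0.
Proof.
rewrite (expand_det_row _ q0) big_ord2 /cofactor !det_mx11 !mxE /= expr0 expr1.
have -> : lift q0 ord0 = q1 by apply: val_inj.
have -> : lift q1 ord0 = q0 by apply: val_inj.
by rewrite !mul1r mulN1r mulrN.
Qed.

Section ComplexParts.
Variable R : realType.
Local Notation C := R[i].
Implicit Types x y : C.

Lemma Re_add x y : Re (x + y) = Re x + Re y. Proof. by case: x => ? ?; case: y. Qed.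
Lemma Re_mul x y : Re (x * y) = Re x * Re y - Im x * Im y.
Proof. by case: x => ? ?; case: y. Qed.

Lemma Re_sum n (F : 'I_n -> C) : Re (\sum_i F i) = \sum_i Re (F i).
Proof. exact: (big_morph _ Re_add). Qed.

Lemma complex_fun2 (T U : Type) (f : T -> U -> C) :
  exists x y : T -> U -> R, f = fun t u => (x t u +i* y t u)%C.
Proof.
exists (fun t u => Re (f t u)), (fun t u => Im (f t u)).
by do 2!apply: funext => ?; case: (f _ _).
Qed.

Lemma complex_fun3 (T : Type) (f : T -> T -> T -> C) :
  exists x y : T -> T -> T -> R, f = fun a b c => (x a b c +i* y a b c)%C.
Proof.
exists (fun a b c => Re (f a b c)), (fun a b c => Im (f a b c)).
by do 3!apply: funext => ?; case: (f _ _ _).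
Qed.

End ComplexParts.

Section PureStateCoordinates.
Variable R : realType.
Local Notation C := R[i].

Definition normsq (z : C) : R := Re z ^+ 2 + Im z ^+ 2.
Definition frob2 n (P : 'M[C]_n) : R := \sum_i \sum_j normsq (P i j).
Definition sqnorm (psi : 'cV[C]_8) : R := \sum_i normsq (psi i 0).

Definition rhoB (rho : 'M[C]_8) : 'M[C]_2 :=
  \matrix_(b, b') \sum_(a < 2) \sum_(c < 2) rho (enc3 a b c) (enc3 a b' c).
Definition rhoC (rho : 'M[C]_8) : 'M[C]_2 :=
  \matrix_(c, c') \sum_(a < 2) \sum_(b < 2) rho (enc3 a b c) (enc3 a b c').
Definition blochB (rho : 'M[C]_8) k : R := Re (\tr (rhoB rho *m pauli R k)).
Definition blochC (rho : 'M[C]_8) k : R := Re (\tr (rhoC rho *m pauli R k)).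

(* [cutXY i c] is the basis index whose qubits XY are [i] and whose third qubit is
   [c]; [ptrace cutXY] is the partial trace [rhoXY] of Defs. *)
Definition ptrace (f : 'I_4 -> 'I_2 -> 'I_8) (rho : 'M[C]_8) : 'M[C]_4 :=
  \matrix_(i, j) \sum_c rho (f i c) (f j c).
Definition cutAB i c := enc3 (hi2 i) (lo2 i) c.
Definition cutAC i b := enc3 (hi2 i) b (lo2 i).
Definition cutBC i a := enc3 a (hi2 i) (lo2 i).

Definition cut_mx (f : 'I_4 -> 'I_2 -> 'I_8) (psi : 'cV[C]_8) : 'M[C]_(4, 2) :=
  \matrix_(i, c) psi (f i c) 0.
Definition sigma_yy : 'M[C]_4 := kron2 (pauli R sigma2) (pauli R sigma2).
Definition flip_gram (V : 'M[C]_(4, 2)) : 'M[C]_2 := V^T *m sigma_yy *m V.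
Definition flip_norm f psi : R := frob2 (flip_gram (cut_mx f psi)).

Definition amp (psi : 'cV[C]_8) a b c : C := psi (enc3 a b c) 0.
Definition entry4 (M : 'M[C]_4) a b a' b' : C := M (enc2 a b) (enc2 a' b').
Definition entry42 (V : 'M[C]_(4, 2)) a b c : C := V (enc2 a b) c.
Definition flip_entry (v : 'I_2 -> 'I_2 -> 'I_2 -> C) c d : C :=
  - (v q0 q0 c * v q1 q1 d) + v q0 q1 c * v q1 q0 d
  + v q1 q0 c * v q0 q1 d - v q1 q1 c * v q0 q0 d.

Lemma proj_entry (psi : 'cV[C]_8) i j : proj psi i j = psi i 0 * Num.conj (psi j 0).
Proof. by rewrite !mxE big_ord1 !mxE. Qed.

Lemma kron2E (A B : 'M[C]_2) a b a' b' :
  kron2 A B (enc2 a b) (enc2 a' b') = A a a' * B b b'.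
Proof. by rewrite mxE !hi2_enc2 !lo2_enc2. Qed.

Lemma pauli_fun k : fun_of_matrix (pauli R k) = fun a b =>
  match val k with
  | 0%N => if a == b then 0 else 1
  | 1%N => if a == b then 0 else (if val a == 0%N then - 'i%C else 'i%C)
  | _ => if a == b then (if val a == 0%N then 1 else -1) else 0
  end.
Proof. by do 2!apply: funext => ?; rewrite mxE. Qed.

Lemma tcorr_sum2 (rho : 'M[C]_4) k l : tcorr rho k l =
  sum2 (fun a => sum2 (fun b => sum2 (fun a' => sum2 (fun b' =>
    Re (entry4 rho a b a' b' * (pauli R k a' a * pauli R l b' b)))))).
Proof.
rewrite /tcorr /mxtrace; under eq_bigr do rewrite mxE big_ord4_enc2.
by rewrite big_ord4_enc2 /sum2 !kron2E !Re_add; ring.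
Qed.

Lemma Re_tr_pauli (M : 'M[C]_2) k :
  Re (\tr (M *m pauli R k)) = sum2 (fun a => sum2 (fun a' => Re (M a a' * pauli R k a' a))).
Proof.
rewrite /mxtrace; under eq_bigr do rewrite mxE big_ord2.
by rewrite big_ord2 !Re_add.
Qed.

Lemma ptrace_proj_entry4 f psi : entry4 (ptrace f (proj psi)) = fun a b a' b' =>
  sum2 (fun c => entry42 (cut_mx f psi) a b c * Num.conj (entry42 (cut_mx f psi) a' b' c)).
Proof.
by do 4!apply: funext => ?; rewrite /entry4 /entry42 /sum2 !mxE big_ord2 !proj_entry.
Qed.

Lemma rhoA_proj psi : fun_of_matrix (rhoA (proj psi)) = fun a a' =>
  sum2 (fun b => sum2 (fun c => amp psi a b c * Num.conj (amp psi a' b c))).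
Proof. by do 2!apply: funext => ?; rewrite mxE !big_ord2 !proj_entry. Qed.

Lemma rhoB_proj psi : fun_of_matrix (rhoB (proj psi)) = fun b b' =>
  sum2 (fun a => sum2 (fun c => amp psi a b c * Num.conj (amp psi a b' c))).
Proof. by do 2!apply: funext => ?; rewrite mxE !big_ord2 !proj_entry. Qed.

Lemma rhoC_proj psi : fun_of_matrix (rhoC (proj psi)) = fun c c' =>
  sum2 (fun a => sum2 (fun b => amp psi a b c * Num.conj (amp psi a b c'))).
Proof. by do 2!apply: funext => ?; rewrite mxE !big_ord2 !proj_entry. Qed.

Lemma cut_mxAB psi : entry42 (cut_mx cutAB psi) = amp psi.
Proof. by do 3!apply: funext => ?; rewrite /entry42 mxE /cutAB hi2_enc2 lo2_enc2. Qed.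

Lemma cut_mxAC psi : entry42 (cut_mx cutAC psi) = fun a c b => amp psi a b c.
Proof. by do 3!apply: funext => ?; rewrite /entry42 mxE /cutAC hi2_enc2 lo2_enc2. Qed.

Lemma cut_mxBC psi : entry42 (cut_mx cutBC psi) = fun b c a => amp psi a b c.
Proof. by do 3!apply: funext => ?; rewrite /entry42 mxE /cutBC hi2_enc2 lo2_enc2. Qed.

Lemma sigma2E : sigma2 = k1. Proof. by apply: val_inj; rewrite /= inordK. Qed.

Lemma flip_gramE V : fun_of_matrix (flip_gram V) = flip_entry (entry42 V).
Proof.
apply: funext => c; apply: funext => d.
rewrite /flip_gram /sigma_yy sigma2E /flip_entry /entry42.
rewrite mxE big_ord4_enc2 !mxE !big_ord4_enc2 !mxE !hi2_enc2 !lo2_enc2.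
move: (fun_of_matrix V) => v; have [x [y ->]] := complex_fun2 v.
by apply/eqP; rewrite eq_complex /=; apply/andP; split; apply/eqP; ring.
Qed.

Lemma flip_norm_sum2 f psi : flip_norm f psi =
  sum2 (fun c => sum2 (fun d => normsq (flip_entry (entry42 (cut_mx f psi)) c d))).
Proof. by rewrite /flip_norm /frob2 flip_gramE !big_ord2. Qed.

Lemma sqnorm_sum2 psi : sqnorm psi =
  sum2 (fun a => sum2 (fun b => sum2 (fun c => normsq (amp psi a b c)))).
Proof. by rewrite /sqnorm big_ord8_enc3 /sum2 !addrA. Qed.

End PureStateCoordinates.

Arguments sigma_yy {R}.

Section PureStateIdentities.
Variable R : realType.
Variable psi : 'cV[R[i]]_8.

Local Notation N := (sqnorm psi).
Local Notation TAB := (flip_norm cutAB psi).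
Local Notation TAC := (flip_norm cutAC psi).
Local Notation TBC := (flip_norm cutBC psi).

(* Writing every amplitude as [x +i* y] lets [simpl] compute all real parts, which
   leaves a polynomial identity over R for [ring]. *)
Ltac expand_amplitudes :=
  rewrite !flip_norm_sum2 ?cut_mxAB ?cut_mxAC ?cut_mxBC sqnorm_sum2;
  move: (amp psi) => z; have [x [y ->]] := complex_fun3 z;
  rewrite /sum2 /flip_entry /normsq /=; ring.

Lemma Scorr_proj_AB : Scorr (ptrace cutAB (proj psi)) = N ^+ 2 + 2 * TAB - TAC - TBC.
Proof.
rewrite /Scorr !big_ord3 !tcorr_sum2 ptrace_proj_entry4 !pauli_fun.
expand_amplitudes.
Qed.

Lemma Scorr_proj_AC : Scorr (ptrace cutAC (proj psi)) = N ^+ 2 + 2 * TAC - TAB - TBC.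
Proof.
rewrite /Scorr !big_ord3 !tcorr_sum2 ptrace_proj_entry4 !pauli_fun.
expand_amplitudes.
Qed.

Lemma Scorr_proj_BC : Scorr (ptrace cutBC (proj psi)) = N ^+ 2 + 2 * TBC - TAB - TAC.
Proof.
rewrite /Scorr !big_ord3 !tcorr_sum2 ptrace_proj_entry4 !pauli_fun.
expand_amplitudes.
Qed.

Lemma bloch_proj_A : \sum_k bloch (proj psi) k ^+ 2 + TAB + TAC = N ^+ 2.
Proof. rewrite big_ord3 /bloch !Re_tr_pauli rhoA_proj !pauli_fun; expand_amplitudes. Qed.

Lemma bloch_proj_B : \sum_k blochB (proj psi) k ^+ 2 + TAB + TBC = N ^+ 2.
Proof. rewrite big_ord3 /blochB !Re_tr_pauli rhoB_proj !pauli_fun; expand_amplitudes. Qed.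

Lemma bloch_proj_C : \sum_k blochC (proj psi) k ^+ 2 + TAC + TBC = N ^+ 2.
Proof. rewrite big_ord3 /blochC !Re_tr_pauli rhoC_proj !pauli_fun; expand_amplitudes. Qed.

Lemma det_flip_gram_AC :
  \det (flip_gram (cut_mx cutAC psi)) = \det (flip_gram (cut_mx cutAB psi)).
Proof.
rewrite !det_mx2 !flip_gramE cut_mxAB cut_mxAC /flip_entry.
move: (amp psi) => z; ring.
Qed.

Lemma det_flip_gram_BC :
  \det (flip_gram (cut_mx cutBC psi)) = \det (flip_gram (cut_mx cutAB psi)).
Proof.
rewrite !det_mx2 !flip_gramE cut_mxAB cut_mxBC /flip_entry.
move: (amp psi) => z; ring.
Qed.

End PureStateIdentities.

Section CharPoly.
Variable F : fieldType.

Lemma char_poly_mulmxC m n (A : 'M[F]_(m, n)) (B : 'M[F]_(n, m)) :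
  'X^n * char_poly (A *m B) = 'X^m * char_poly (B *m A).
Proof.
pose Ap := map_mx polyC A; pose Bp := map_mx polyC B.
have eAB : char_poly (A *m B) = \det ('X%:M - Ap *m Bp).
  by rewrite /char_poly /char_poly_mx map_mxM.
have eBA : char_poly (B *m A) = \det ('X%:M - Bp *m Ap).
  by rewrite /char_poly /char_poly_mx map_mxM.
pose M := block_mx ('X%:M : 'M_m) Ap Bp (1%:M : 'M_n).
have detM : \det M = char_poly (A *m B).
  have -> : M = block_mx 1%:M Ap 0 1%:M *m block_mx ('X%:M - Ap *m Bp) 0 Bp 1%:M.
    by rewrite mulmx_block ?mul1mx ?mul0mx ?mulmx1 ?mulmx0 ?add0r ?addr0 subrK.
  by rewrite det_mulmx det_ublock det_lblock !det1 eAB !mul1r mulr1.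
pose N := block_mx ('X%:M : 'M_m) Ap ('X *: Bp) ('X%:M : 'M_n).
have detN_AB : \det N = 'X^n * \det M.
  have -> : N = block_mx 1%:M 0 0 ('X%:M) *m M.
    by rewrite mulmx_block ?mul1mx ?mul0mx ?add0r ?addr0 mul_scalar_mx ?mulmx1.
  by rewrite det_mulmx det_ublock det1 det_scalar mul1r.
have detN_BA : \det N = 'X^m * char_poly (B *m A).
  have -> : N = block_mx 1%:M 0 Bp 1%:M *m block_mx ('X%:M) Ap 0 ('X%:M - Bp *m Ap).
    by rewrite mulmx_block ?mul1mx ?mul0mx ?mulmx0 ?add0r ?addr0 mul_mx_scalar addrC subrK.
  by rewrite det_mulmx det_lblock det_ublock !det1 det_scalar !mul1r ?mulr1 eBA.
by rewrite -detM -detN_AB detN_BA.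
Qed.

Lemma char_poly_mx2 (M : 'M[F]_2) :
  char_poly M = 'X^2 - (\tr M)%:P * 'X + (\det M)%:P.
Proof.
rewrite /char_poly /char_poly_mx det_mx2 !mxE det_mx2 /mxtrace big_ord2 /=.
rewrite !mulr1n !mulr0n !sub0r ?rmorphD ?rmorphB ?rmorphN ?rmorphM /=; ring.
Qed.

End CharPoly.

Section Concurrence.
Variable R : realType.
Local Notation C := R[i].

Lemma mul_conj (z : C) : z * Num.conj z = (normsq z)%:C%C.
Proof.
case: z => a b; apply/eqP; rewrite eq_complex /normsq /=.
by apply/andP; split; apply/eqP; ring.
Qed.

Lemma normc_sq (z : C) : normc z ^+ 2 = normsq z.
Proof. by case: z => a b; rewrite /= sqr_sqrtr // addr_ge0 ?sqr_ge0. Qed.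

Lemma conj_pauliY a b : Num.conj (pauli R k1 a b) = - pauli R k1 a b.
Proof.
rewrite pauli_fun /=; case: (a == b); first by rewrite rmorph0 oppr0.
by case: (val a == 0%N); apply/eqP; rewrite eq_complex /= ?oppr0 ?opprK !eqxx.
Qed.

Lemma conjmx_sigma_yy : Defs.conjmx (@sigma_yy R) = sigma_yy.
Proof.
apply/matrixP => i j; rewrite -(enc2_hilo i) -(enc2_hilo j) mxE /sigma_yy sigma2E.
by rewrite kron2E rmorphM /= !conj_pauliY mulrNN.
Qed.

Lemma wootters_mx_gram (V : 'M[C]_(4, 2)) :
  wootters_mx (V *m adjmx V) = (V *m Defs.conjmx (flip_gram V)) *m (V^T *m sigma_yy).
Proof.
have conjK : map_mx Num.conj (map_mx Num.conj V^T) = V^T.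
  by apply/matrixP => i j; rewrite !mxE conjCK.
rewrite /wootters_mx -/sigma_yy /flip_gram /adjmx /Defs.conjmx !map_mxM conjK.
by rewrite -/(Defs.conjmx sigma_yy) conjmx_sigma_yy !mulmxA.
Qed.

Lemma char_poly_wootters_gram (V : 'M[C]_(4, 2)) (P := flip_gram V) :
  char_poly (wootters_mx (V *m adjmx V)) =
  'X^2 * ('X^2 - ((frob2 P)%:C%C)%:P * 'X + ((normsq (\det P))%:C%C)%:P).
Proof.
have X2_neq0 : ('X^2 : {poly C}) != 0 by rewrite expf_neq0 ?polyX_eq0.
have PPc : V^T *m sigma_yy *m (V *m Defs.conjmx P) = P *m Defs.conjmx P.
  by rewrite /P /flip_gram !mulmxA.
have := char_poly_mulmxC (V *m Defs.conjmx P) (V^T *m sigma_yy).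
rewrite -wootters_mx_gram PPc -[4%N]/(2 + 2)%N exprD -mulrA => /(mulfI X2_neq0) ->.
have Psym : P q1 q0 = P q0 q1 by rewrite /P flip_gramE /flip_entry; ring.
clearbody P; rewrite char_poly_mx2; congr (_ * (_ - _%:P * _ + _%:P)).
- rewrite /mxtrace /frob2 !big_ord2 !mxE !big_ord2 !mxE Psym !mul_conj.
  by rewrite -!rmorphD.
- by rewrite det_mulmx det_map_mx mul_conj.
Qed.

Lemma normc_ge0 (z : C) : 0 <= normc z.
Proof. by case: z => ? ?; exact: sqrtr_ge0. Qed.

Lemma normc_det_le_frob2 (P : 'M[C]_2) : 2 * normc (\det P) <= frob2 P.
Proof.
have tri : normc (\det P) <=
    normc (P q0 q0) * normc (P q1 q1) + normc (P q0 q1) * normc (P q1 q0).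
  by rewrite det_mx2 -!normcM -(normcN (_ * P q1 q0)); exact: le_normcD.
rewrite /frob2 !big_ord2 -!normc_sq.
have := sqr_ge0 (normc (P q0 q0) - normc (P q1 q1)).
have := sqr_ge0 (normc (P q0 q1) - normc (P q1 q0)).
nra.
Qed.

Lemma wootters_lambdas_spec_uniq (M : 'M[C]_4) s t :
  wootters_lambdas_spec M s -> wootters_lambdas_spec M t -> s = t.
Proof.
move=> [_ s_ge0 s_sorted cps] [_ t_ge0 t_sorted cpt].
pose f (x : R) : C := (x ^+ 2)%:C%C.
have /(perm_map (fun z => Num.sqrt (Re z))) : perm_eq (map f s) (map f t).
  by apply: prod_XsubC_eq; rewrite !big_map -cps -cpt.
have fK u : all (fun x => 0 <= x) u -> map (fun z => Num.sqrt (Re z)) (map f u) = u.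
  move=> /allP u_ge0; rewrite -map_comp map_id_in // => x /u_ge0 x_ge0 /=.
  by rewrite sqrtr_sqr ger0_norm.
rewrite !fK //; apply: sorted_eq s_sorted t_sorted.
- by move=> y x z le_yx le_zy; exact: le_trans le_zy le_yx.
- by move=> x y /andP[? ?]; apply/le_anti/andP.
Qed.

Lemma wootters_lambdasE (rho : 'M[C]_4) s :
  wootters_lambdas_spec (wootters_mx rho) s -> wootters_lambdas rho = s.
Proof.
rewrite /wootters_lambdas => spec_s.
case: xgetP => [t _ spec_t | /(_ s spec_s)//].
exact: wootters_lambdas_spec_uniq spec_t spec_s.
Qed.

Lemma concurrence_char_poly (rho : 'M[C]_4) (T d : R) :
  char_poly (wootters_mx rho) = 'X^2 * ('X^2 - (T%:C%C)%:P * 'X + ((d ^+ 2)%:C%C)%:P) ->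
  0 <= d -> 2 * d <= T -> concurrence rho ^+ 2 = T - 2 * d.
Proof.
move=> cp d_ge0 le_dT.
pose p := Num.sqrt (T + 2 * d); pose q := Num.sqrt (T - 2 * d).
have p2 : p ^+ 2 = T + 2 * d by rewrite sqr_sqrtr //; lra.
have q2 : q ^+ 2 = T - 2 * d by rewrite sqr_sqrtr //; lra.
have q_ge0 : 0 <= q := sqrtr_ge0 _.
have le_qp : q <= p by apply: ler_wsqrtr; lra.
(* The roots are 0, 0 and s1^2, s2^2 with s1^2 + s2^2 = T and s1 s2 = d. *)
pose s := [:: (p + q) / 2; (p - q) / 2; 0; 0].
have spec_s : wootters_lambdas_spec (wootters_mx rho) s.
  split => //=.
  - by rewrite lexx !andbT; apply/andP; split; lra.
  - by rewrite lexx !andbT; apply/andP; split; lra.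
  have sum_sq : ((p + q) / 2) ^+ 2 + ((p - q) / 2) ^+ 2 = T.
    have -> : ((p + q) / 2) ^+ 2 + ((p - q) / 2) ^+ 2 = (p ^+ 2 + q ^+ 2) / 2 by field.
    by rewrite p2 q2; field.
  have prod_sq : ((p + q) / 2) ^+ 2 * ((p - q) / 2) ^+ 2 = d ^+ 2.
    have -> : ((p + q) / 2) ^+ 2 * ((p - q) / 2) ^+ 2 = ((p ^+ 2 - q ^+ 2) / 4) ^+ 2.
      by field.
    by rewrite p2 q2; congr (_ ^+ 2); field.
  rewrite cp -sum_sq -prod_sq !big_cons big_nil expr0n /=.
  rewrite !rmorphD !rmorphM /= !rmorph0 !subr0 mulr1; ring.
rewrite /concurrence (wootters_lambdasE spec_s) /= !subr0.
have -> : (p + q) / 2 - (p - q) / 2 = q by field.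
by rewrite max_r.
Qed.

Lemma concurrence_gram (V : 'M[C]_(4, 2)) :
  concurrence (V *m adjmx V) ^+ 2 = frob2 (flip_gram V) - 2 * normc (\det (flip_gram V)).
Proof.
apply: concurrence_char_poly; last exact: normc_det_le_frob2; last exact: normc_ge0.
by rewrite char_poly_wootters_gram normc_sq.
Qed.

End Concurrence.

Section PureBound.
Variable R : realType.
Local Notation C := R[i].

Lemma rhoAB_ptrace (rho : 'M[C]_8) : rhoAB rho = ptrace cutAB rho. Proof. by []. Qed.
Lemma rhoAC_ptrace (rho : 'M[C]_8) : rhoAC rho = ptrace cutAC rho. Proof. by []. Qed.
Lemma rhoBC_ptrace (rho : 'M[C]_8) : rhoBC rho = ptrace cutBC rho. Proof. by []. Qed.

Lemma ptrace_proj f (psi : 'cV[C]_8) :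
  ptrace f (proj psi) = cut_mx f psi *m adjmx (cut_mx f psi).
Proof.
by apply/matrixP => i j; rewrite !mxE; apply: eq_bigr => c _; rewrite proj_entry !mxE.
Qed.

Lemma sqnorm_unit (psi : 'cV[C]_8) : unit_vec psi -> sqnorm psi = 1.
Proof.
move/(congr1 (@complex.Re R)); rewrite mxE Re_sum => sum1.
by rewrite /sqnorm -[1]sum1; apply: eq_bigr => i _; rewrite !mxE mulrC mul_conj.
Qed.

Variable psi : 'cV[C]_8.
Hypothesis psi_unit : unit_vec psi.

Local Notation TAB := (flip_norm cutAB psi).
Local Notation TAC := (flip_norm cutAC psi).
Local Notation TBC := (flip_norm cutBC psi).
Local Notation D := (normc (\det (flip_gram (cut_mx cutAB psi)))).

Lemma concurrence_cut f :
  concurrence (ptrace f (proj psi)) ^+ 2 =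
  flip_norm f psi - 2 * normc (\det (flip_gram (cut_mx f psi))).
Proof. by rewrite ptrace_proj concurrence_gram. Qed.

Lemma tau_pureE : tau_pure psi = 4 * D.
Proof.
have cAB := concurrence_cut cutAB; have cAC := concurrence_cut cutAC.
rewrite det_flip_gram_AC in cAC.
have bA := bloch_proj_A psi; rewrite sqnorm_unit // expr1n in bA.
rewrite /tau_pure rhoAB_ptrace rhoAC_ptrace.
(* Generalizing the concurrences first keeps lra from unfolding them. *)
move: (concurrence (ptrace cutAB _)) (concurrence (ptrace cutAC _)) cAB cAC => cab cac.
lra.
Qed.

Lemma sum_sqr_ge0 n (F : 'I_n -> R) : 0 <= \sum_k F k ^+ 2.
Proof. by apply: sumr_ge0 => k _; exact: sqr_ge0. Qed.

Lemma Smax_tau_pure_le : Smax (proj psi) + 2 * tau_pure psi <= 3.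
Proof.
have dAB : 2 * D <= TAB := normc_det_le_frob2 _.
have dAC : 2 * D <= TAC by rewrite -det_flip_gram_AC; exact: normc_det_le_frob2.
have dBC : 2 * D <= TBC by rewrite -det_flip_gram_BC; exact: normc_det_le_frob2.
have bA := bloch_proj_A psi; have bB := bloch_proj_B psi; have bC := bloch_proj_C psi.
have bA0 := sum_sqr_ge0 (bloch (proj psi)).
have bB0 := sum_sqr_ge0 (blochB (proj psi)).
have bC0 := sum_sqr_ge0 (blochC (proj psi)).
have sAB := Scorr_proj_AB psi; have sAC := Scorr_proj_AC psi; have sBC := Scorr_proj_BC psi.
rewrite sqnorm_unit // expr1n in bA bB bC sAB sAC sBC.
rewrite tau_pureE /Smax rhoAB_ptrace rhoAC_ptrace rhoBC_ptrace -lerBrDr !ge_max.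
(* As in tau_pureE, lra needs the atoms generalized. *)
move: dAB dAC dBC bA bB bC bA0 bB0 bC0 sAB sAC sBC.
move: (Scorr _) (Scorr _) (Scorr _) (\sum_(k < 3) _) (\sum_(k < 3) _) (\sum_(k < 3) _).
move: TAB TAC TBC D => *.
by apply/and3P; split; lra.
Qed.

End PureBound.

Section Decomposition.
Variable R : realType.
Local Notation C := R[i].
Local Open Scope sesquilinear_scope.

Lemma delta_quad n (A : 'M[C]_n) j k :
  (delta_mx 0 j : 'rV_n) *m A *m (delta_mx k 0 : 'cV_n) = (A j k)%:M.
Proof. by apply/matrixP => ? ?; rewrite !ord1 -rowE -colE !mxE. Qed.

Lemma adjmx_delta m n (i : 'I_m) (j : 'I_n) :
  adjmx (delta_mx i j : 'M[C]_(m, n)) = delta_mx j i.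
Proof. by rewrite /adjmx trmx_delta map_delta_mx. Qed.

Lemma adjmx_mul m n p (A : 'M[C]_(m, n)) (B : 'M[C]_(n, p)) :
  adjmx (A *m B) = adjmx B *m adjmx A.
Proof. by rewrite /adjmx trmx_mul map_mxM. Qed.

Lemma quad_test_vec n (A : 'M[C]_n) j k (a : C)
    (v := delta_mx j 0 + a *: delta_mx k 0 : 'cV_n) :
  (adjmx v *m A *m v) 0 0 =
  A j j + a * A j k + Num.conj a * A k j + Num.conj a * a * A k k.
Proof.
rewrite /v /adjmx [(_ + _)^T]linearD /= [(_ *: _)^T]linearZ /= map_mxD map_mxZ.
rewrite !trmx_delta !map_delta_mx !mulmxDl !mulmxDr -?scalemxAl -?scalemxAr -?scalemxAl.
by rewrite !delta_quad !mxE /= !mulr1n; ring.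
Qed.

Lemma psd_hermitian n (A : 'M[C]_n) : psd A -> forall j k, A k j = Num.conj (A j k).
Proof.
move=> A_psd j k.
have realq j' a :
    Im (A j' j' + a * A j' k + Num.conj a * A k j' + Num.conj a * a * A k k) = 0.
  by rewrite -quad_test_vec; exact: ger0_Im (A_psd _).
have := realq j 1; have := realq j 'i%C; have := realq k 0; have := realq j 0.
move: (A j j) (A j k) (A k j) (A k k) => [x1 y1] [x2 y2] [x3 y3] [x4 y4] /=.
move=> *; apply/eqP; rewrite eq_complex /=; apply/andP; split; apply/eqP; lra.
Qed.

Lemma adjmxE m n (M : 'M[C]_(m, n)) : adjmx M = M ^t*.
Proof. by []. Qed.

Lemma adjmxK m n (M : 'M[C]_(m, n)) : adjmx (adjmx M) = M.
Proof. exact: trmxCK. Qed.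

Lemma psd_adjmx n (A : 'M[C]_n) : psd A -> adjmx A = A.
Proof. by move=> A_psd; apply/matrixP => i j; rewrite !mxE -psd_hermitian. Qed.

Lemma adj_diag_mulmx n (P : 'M[C]_n) (d : 'rV[C]_n) :
  adjmx P *m diag_mx d *m P = \sum_i d 0 i *: (adjmx (row i P) *m row i P).
Proof.
apply/matrixP => x y; rewrite mul_mx_diag mxE summxE; apply: eq_bigr => i _.
by rewrite !mxE big_ord1 !mxE mulrAC mulrC.
Qed.

Lemma state_decomposition (rho : 'M[C]_8) :
  is_state rho -> exists (p : 'I_8 -> R) (psi : 'I_8 -> 'cV[C]_8), decomposition rho p psi.
Proof.
move=> [rho_psd tr_rho].
have /orthomx_spectralP : rho \is normalmx.
  by apply/normalmxP; rewrite -adjmxE psd_adjmx.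
set P := spectralmx rho; set d := spectral_diag rho.
have P_unitary : P \is unitarymx := spectral_unitarymx rho.
have PPt : P *m adjmx P = 1%:M by apply/unitarymxP.
rewrite invmx_unitary // -adjmxE => rhoE.
pose psi i : 'cV[C]_8 := adjmx (row i P).
have sandwich i M : (adjmx (psi i) *m M *m psi i) 0 0 = (P *m M *m adjmx P) i i.
  rewrite /psi adjmxK rowE adjmx_mul adjmx_delta !mulmxA.
  by rewrite -(mulmxA _ P M) -(mulmxA _ (P *m M)) delta_quad mxE mulr1n.
have d_quad i : d 0 i = (adjmx (psi i) *m rho *m psi i) 0 0.
  by rewrite sandwich rhoE !mulmxA PPt mul1mx -mulmxA PPt mulmx1 mxE eqxx mulr1n.
have d_ge0 i : 0 <= d 0 i by rewrite d_quad; exact: rho_psd.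
pose p i := Re (d 0 i).
have dE i : d 0 i = (p i)%:C%C.
  by have := d_ge0 i; rewrite /p; case: (d 0 i) => a b; rewrite lecE /= => /andP[/eqP -> _].
exists p, psi; split.
- by move=> i; have := d_ge0 i; rewrite dE lecR.
- move: tr_rho; rewrite rhoE mxtrace_mulC mulmxA PPt mul1mx mxtrace_diag.
  by move=> /(congr1 (@complex.Re R)); rewrite Re_sum.
- move=> i; rewrite /unit_vec -[adjmx (psi i)]mulmx1 sandwich mulmx1 PPt.
  by rewrite mxE eqxx.
rewrite {1}rhoE adj_diag_mulmx; apply: eq_bigr => i _.
by rewrite dE /proj /psi adjmxK.
Qed.

End Decomposition.

Section Mixed.
Variable R : realType.
Local Notation C := R[i].

Lemma sqr_mean_le_mean_sqr n (p t : 'I_n -> R) : (forall i, 0 <= p i) -> \sum_i p i = 1 ->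
  (\sum_i p i * t i) ^+ 2 <= \sum_i p i * t i ^+ 2.
Proof.
move=> p_ge0 p_sum1; set m := \sum_i p i * t i.
have var_ge0 : 0 <= \sum_i p i * (t i - m) ^+ 2.
  by apply: sumr_ge0 => i _; rewrite mulr_ge0 ?sqr_ge0.
have varE : \sum_i p i * (t i - m) ^+ 2 =
    \sum_i p i * t i ^+ 2 - 2 * m * m + m ^+ 2 * \sum_i p i.
  rewrite (eq_bigr (fun i => p i * t i ^+ 2 + (- (2 * m) * (p i * t i) + m ^+ 2 * p i))).
    by rewrite !big_split /= -!mulr_sumr addrA mulNr.
  by move=> i _; ring.
rewrite varE p_sum1 in var_ge0; lra.
Qed.

Lemma ptrace_sum f n (c : 'I_n -> C) (M : 'I_n -> 'M[C]_8) :
  ptrace f (\sum_i c i *: M i) = \sum_i c i *: ptrace f (M i).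
Proof.
apply/matrixP => x y; rewrite !mxE summxE.
under eq_bigr do rewrite summxE.
rewrite exchange_big; apply: eq_bigr => i _; rewrite !mxE mulr_sumr.
by apply: eq_bigr => c' _; rewrite mxE.
Qed.

Lemma tcorr_sum n (p : 'I_n -> R) (N : 'I_n -> 'M[C]_4) k l :
  tcorr (\sum_i (p i)%:C%C *: N i) k l = \sum_i p i * tcorr (N i) k l.
Proof.
rewrite /tcorr mulmx_suml /mxtrace.
under eq_bigr do rewrite summxE.
rewrite exchange_big Re_sum; apply: eq_bigr => i _.
under eq_bigr do rewrite -scalemxAl mxE.
by rewrite -mulr_sumr Re_mul /= mul0r subr0.
Qed.

Lemma Scorr_convex n (p : 'I_n -> R) (N : 'I_n -> 'M[C]_4) :
  (forall i, 0 <= p i) -> \sum_i p i = 1 ->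
  Scorr (\sum_i (p i)%:C%C *: N i) <= \sum_i p i * Scorr (N i).
Proof.
move=> p_ge0 p_sum1; rewrite /Scorr.
under eq_bigr do under eq_bigr do rewrite tcorr_sum.
have -> : \sum_i p i * (\sum_k \sum_l tcorr (N i) k l ^+ 2) =
    \sum_k \sum_l \sum_i p i * tcorr (N i) k l ^+ 2.
  under eq_bigr do rewrite mulr_sumr; rewrite exchange_big; apply: eq_bigr => k _.
  by under eq_bigr do rewrite mulr_sumr; rewrite exchange_big.
by apply: ler_sum => k _; apply: ler_sum => l _; exact: sqr_mean_le_mean_sqr.
Qed.

Lemma Smax_convex n (p : 'I_n -> R) (psi : 'I_n -> 'cV[C]_8) :
  (forall i, 0 <= p i) -> \sum_i p i = 1 ->
  Smax (\sum_i (p i)%:C%C *: proj (psi i)) <= \sum_i p i * Smax (proj (psi i)).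
Proof.
move=> p_ge0 p_sum1.
have cut_le f : (forall rho : 'M[C]_8, Scorr (ptrace f rho) <= Smax rho) ->
    Scorr (ptrace f (\sum_i (p i)%:C%C *: proj (psi i))) <=
    \sum_i p i * Smax (proj (psi i)).
  move=> le_f; rewrite ptrace_sum; apply: le_trans (Scorr_convex _ p_ge0 p_sum1) _.
  by apply: ler_sum => i _; apply: ler_wpM2l; [exact: p_ge0 | exact: le_f].
rewrite [X in X <= _]/Smax !ge_max.
by rewrite (cut_le cutAB) ?(cut_le cutAC) ?(cut_le cutBC) // => rho;
  rewrite /Smax !le_max lexx ?orbT.
Qed.

Lemma tau_pure_ge0 (psi : 'cV[C]_8) : unit_vec psi -> 0 <= tau_pure psi.
Proof. by move=> psi_unit; rewrite tau_pureE // mulr_ge0 ?normc_ge0. Qed.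

Lemma Smax_tau_decomposition_le (rho : 'M[C]_8) n (p : 'I_n -> R) psi :
  decomposition rho p psi -> Smax rho + 2 * \sum_i p i * tau_pure (psi i) <= 3.
Proof.
case=> p_ge0 p_sum1 psi_unit ->.
apply: le_trans (lerD (Smax_convex psi p_ge0 p_sum1) (lexx _)) _.
have -> : 3 = \sum_i p i * 3 :> R by rewrite -mulr_suml p_sum1 mul1r.
rewrite mulr_sumr -big_split /=; apply: ler_sum => i _.
rewrite mulrCA -mulrDr; apply: ler_wpM2l; [exact: p_ge0 | exact: Smax_tau_pure_le].
Qed.

Lemma tau_le_decomposition (rho : 'M[C]_8) n (p : 'I_n -> R) psi :
  decomposition rho p psi -> tau rho <= \sum_i p i * tau_pure (psi i).
Proof.
move=> dec; apply: ge_inf; last by exists n, p, psi.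
exists 0 => _ [m [q [phi [[q_ge0 _ phi_unit _] ->]]]].
by apply: sumr_ge0 => i _; rewrite mulr_ge0 ?tau_pure_ge0.
Qed.

End Mixed.

Theorem theorem4 (R : realType) (rho : 'M[R[i]]_8) :
  is_state rho -> Smax rho + 2 * tau rho <= 3.
Proof.
move=> /state_decomposition [p [psi dec]].
apply: le_trans (Smax_tau_decomposition_le dec).
by rewrite lerD2l ler_pM2l // tau_le_decomposition.
Qed.
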